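(* The function $\phi$ is twice differentiable on $(0,1)$ and satisfies $0 < \phi''(u) < \phi'(u)/u$ for all $u \in (0,1)$.
   Context: $\log$ denotes the base-2 logarithm and $\ln$ the natural logarithm. Let $h(q) = -q\log q - (1-q)\log(1-q)$ be the binary entropy function on $[0,1]$ (with $0\log 0 = 0$). Define $\phi:[0,1]\to[0,1]$ by $\phi(u) = h\bigl(\tfrac{1-\sqrt{1-u^2}}{2}\bigr)$. *)

From Stdlib Require Import Reals.
Open Scope R_scope.

Definition log2 (x : R) : R := ln x / ln 2.

Definition xlog2 (q : R) : R := if Req_EM_T q 0 then 0 else q * log2 q.

Definition h (q : R) : R := - xlog2 q - xlog2 (1 - q).

Definition phi (u : R) : R := h ((1 - sqrt (1 - u ^ 2)) / 2).

(* With s = sqrt (1 - u^2) and L s = ln ((1 + s) / (1 - s)), one computes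
   phi' u = u L(s) / (2 s ln 2) and phi'' u = (L(s) - 2 s) / (2 s^3 ln 2).
   Both claims then amount to 2 s < L(s) < 2 s / (1 - s^2) for 0 < s < 1,
   and each of these follows from the mean value theorem, since the two
   differences vanish at s = 0 and have positive derivatives on (0, 1)
   (2 s^2 / (1 - s^2), and 2 s L(s), positive by the first bound). *)

From Stdlib Require Import Reals Lra.
From Coquelicot Require Import Coquelicot.
Open Scope R_scope.

Definition sqrt_compl (u : R) : R := sqrt (1 - u ^ 2).

Definition log_ratio (s : R) : R := ln (1 + s) - ln (1 - s).

Definition dphi (u : R) : R :=
  u * log_ratio (sqrt_compl u) / (2 * sqrt_compl u * ln 2).

Definition d2phi (u : R) : R :=
  (log_ratio (sqrt_compl u) - 2 * sqrt_compl u) / (2 * ln 2 * sqrt_compl u ^ 3).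

(* [phi] without the case split of [xlog2], valid when both masses are positive. *)
Definition phi_smooth (u : R) : R :=
  - ((1 - sqrt_compl u) / 2 * ln ((1 - sqrt_compl u) / 2)
     + (1 + sqrt_compl u) / 2 * ln ((1 + sqrt_compl u) / 2)) / ln 2.

Lemma ln2_gt0 : 0 < ln 2.
Proof. rewrite <- ln_1; apply ln_increasing; lra. Qed.

Lemma sqrt_compl_bounds (u : R) : 0 < u < 1 ->
  0 < sqrt_compl u < 1 /\ sqrt_compl u * sqrt_compl u = 1 - u * u.
Proof.
intros Hu; unfold sqrt_compl; replace (u ^ 2) with (u * u) by ring.
assert (H1 : 0 < 1 - u * u) by nra.
split; [split|].
- now apply sqrt_lt_R0.
- rewrite <- sqrt_1 at 2; apply sqrt_lt_1; nra.
- now apply sqrt_sqrt, Rlt_le.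
Qed.

Lemma phi_eq_smooth (u : R) : 0 < u < 1 -> phi u = phi_smooth u.
Proof.
intros Hu; destruct (sqrt_compl_bounds u Hu) as [[Hs0 Hs1] _].
pose proof ln2_gt0.
unfold phi, phi_smooth, h, xlog2, log2; fold (sqrt_compl u).
replace (1 - (1 - sqrt_compl u) / 2) with ((1 + sqrt_compl u) / 2) by field.
destruct (Req_EM_T ((1 - sqrt_compl u) / 2) 0); [lra|].
destruct (Req_EM_T ((1 + sqrt_compl u) / 2) 0); [lra|].
field; lra.
Qed.

Lemma is_derive_phi_smooth (u : R) : 0 < u < 1 -> is_derive phi_smooth u (dphi u).
Proof.
intros Hu; destruct (sqrt_compl_bounds u Hu) as [[Hs0 Hs1] _].
pose proof ln2_gt0.
unfold phi_smooth, dphi, log_ratio, sqrt_compl in *.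
replace (u ^ 2) with (u * u) in * by ring.
set (s := sqrt (1 - u * u)) in *.
auto_derive; replace (1 + - (u * (u * 1))) with (1 - u * u) by ring; fold s.
- repeat split; nra.
- rewrite !ln_mult by lra.
  replace (1 + - s) with (1 - s) by ring.
  field; repeat split; lra.
Qed.

Lemma is_derive_dphi (u : R) : 0 < u < 1 -> is_derive dphi u (d2phi u).
Proof.
intros Hu; destruct (sqrt_compl_bounds u Hu) as [[Hs0 Hs1] Hss].
pose proof ln2_gt0.
unfold dphi, d2phi, log_ratio, sqrt_compl in *.
replace (u ^ 2) with (u * u) in * by ring.
set (s := sqrt (1 - u * u)) in *.
auto_derive; replace (1 + - (u * (u * 1))) with (1 - u * u) by ring; fold s.
- repeat split; nra.
- replace (1 + - s) with (1 - s) by ring.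
  field_simplify; [| repeat split; lra | repeat split; lra].
  replace (u ^ 2) with (1 - s ^ 2) by (simpl; lra).
  assert (0 < 4 * s ^ 3 * (1 - s ^ 2) * ln 2 ^ 2)
    by (repeat apply Rmult_lt_0_compat; try apply pow_lt; nra).
  field; repeat split; [lra | lra |].
  replace (-4 * s ^ 5 * ln 2 ^ 2 + 4 * s ^ 3 * ln 2 ^ 2)
    with (4 * s ^ 3 * (1 - s ^ 2) * ln 2 ^ 2) by ring; lra.
Qed.

Lemma gt0_of_is_derive_gt0 (f f' : R -> R) (s : R) : 0 < s ->
  (forall x, 0 <= x <= s -> is_derive f x (f' x)) ->
  (forall x, 0 < x < s -> 0 < f' x) ->
  f 0 = 0 -> 0 < f s.
Proof.
intros Hs Hder Hpos Hf0.
destruct (MVT_cor2 f f' 0 s Hs) as [c [Hc Hcs]].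
- intros x Hx; now apply is_derive_Reals, Hder.
- rewrite Hf0, Rminus_0_r in Hc; rewrite Rminus_0_r in Hc.
  rewrite Hc; apply Rmult_lt_0_compat; [apply Hpos|]; lra.
Qed.

Lemma log_ratio_gt (s : R) : 0 < s < 1 -> 2 * s < log_ratio s.
Proof.
intros Hs; apply Rlt_0_minus.
apply (gt0_of_is_derive_gt0 (fun x => log_ratio x - 2 * x)
         (fun x => 2 * (x * x) / (1 - x * x))); [lra | | | ].
- intros x Hx; unfold log_ratio; auto_derive; [repeat split; lra|].
  field; repeat split; nra.
- intros x Hx; apply Rdiv_lt_0_compat; nra.
- unfold log_ratio; rewrite Rplus_0_r, Rminus_0_r, ln_1; ring.
Qed.

Lemma log_ratio_lt (s : R) : 0 < s < 1 -> (1 - s * s) * log_ratio s < 2 * s.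
Proof.
intros Hs; apply Rlt_0_minus.
apply (gt0_of_is_derive_gt0 (fun x => 2 * x - (1 - x * x) * log_ratio x)
         (fun x => 2 * x * log_ratio x)); [lra | | | ].
- intros x Hx; unfold log_ratio; auto_derive; [repeat split; lra|].
  replace (1 + - x) with (1 - x) by ring.
  field; repeat split; nra.
- intros x Hx; pose proof (log_ratio_gt x ltac:(lra)); nra.
- unfold log_ratio; rewrite Rplus_0_r, Rminus_0_r, ln_1; ring.
Qed.

Lemma d2phi_gt0 (u : R) : 0 < u < 1 -> 0 < d2phi u.
Proof.
intros Hu; destruct (sqrt_compl_bounds u Hu) as [Hs _].
pose proof ln2_gt0; pose proof (log_ratio_gt _ Hs).
unfold d2phi; apply Rdiv_lt_0_compat; [lra|].
assert (0 < sqrt_compl u ^ 3) by (apply pow_lt; lra).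
apply Rmult_lt_0_compat; lra.
Qed.

Lemma d2phi_lt_dphi_div (u : R) : 0 < u < 1 -> d2phi u < dphi u / u.
Proof.
intros Hu; destruct (sqrt_compl_bounds u Hu) as [Hs _].
pose proof ln2_gt0; pose proof (log_ratio_lt _ Hs).
unfold d2phi, dphi; set (s := sqrt_compl u) in *; set (l := log_ratio s) in *.
assert (0 < s ^ 3) by (apply pow_lt; lra).
apply Rlt_0_minus.
replace (u * l / (2 * s * ln 2) / u - (l - 2 * s) / (2 * ln 2 * s ^ 3))
  with ((2 * s - (1 - s * s) * l) / (2 * ln 2 * s ^ 3)) by (field; repeat split; lra).
apply Rdiv_lt_0_compat; [lra|].
apply Rmult_lt_0_compat; lra.
Qed.

Theorem lemma1 :
  exists phi1 phi2 : R -> R,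
    forall u : R, 0 < u < 1 ->
      derivable_pt_lim phi u (phi1 u) /\
      derivable_pt_lim phi1 u (phi2 u) /\
      0 < phi2 u < phi1 u / u.
Proof.
exists dphi, d2phi; intros u Hu.
assert (Hnear : locally u (fun v => phi_smooth v = phi v)).
{ apply (filter_imp (fun v => 0 < v /\ v < 1)).
  - intros v Hv; symmetry; now apply phi_eq_smooth.
  - apply (open_and _ _ (open_gt 0) (open_lt 1)); lra. }
split; [|split].
- apply is_derive_Reals, (is_derive_ext_loc _ _ _ _ Hnear), is_derive_phi_smooth, Hu.
- apply is_derive_Reals, is_derive_dphi, Hu.
- split; [apply d2phi_gt0 | apply d2phi_lt_dphi_div]; exact Hu.
Qed.
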